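(* For every prime $p$ there exists a linear $(p-2,p,p)$-AONT over $\mathbb{F}_p$, i.e. an invertible $p\times p$ matrix over $\mathbb{F}_p$ all of whose $(p-2)\times(p-2)$ submatrices are invertible.
   Context: A linear $(t,s,q)$-AONT over $\mathbb{F}_q$ is given by an invertible $s\times s$ matrix $M$ over $\mathbb{F}_q$ (transform $(y_1,\dots,y_s)=(x_1,\dots,x_s)M^{-1}$); $M$ defines a linear $(t,s,q)$-AONT iff every $t\times t$ submatrix of $M$ is invertible (a $0\times 0$ submatrix counts as invertible). *)

From HB Require Import structures.
From mathcomp Require Import all_boot all_order all_algebra all_fingroup.
Set Implicit Arguments. Unset Strict Implicit. Unset Printing Implicit Defensive.
Import GRing.Theory.
Local Open Scope ring_scope.

Definition submx_sets (F : fieldType) (s t : nat) (M : 'M[F]_s)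
  (R C : {set 'I_s}) (hR : #|R| = t) (hC : #|C| = t) : 'M[F]_t :=
  \matrix_(i < t, j < t)
    M (enum_val (cast_ord (esym hR) i)) (enum_val (cast_ord (esym hC) j)).

Definition linear_AONT (F : fieldType) (t s : nat) (M : 'M[F]_s) : Prop :=
  M \in unitmx /\
  forall (R C : {set 'I_s}) (hR : #|R| = t) (hC : #|C| = t),
    submx_sets M hR hC \in unitmx.

(* If M N = 1 and the (s-2)-submatrix of M on rows R and columns C is singular,
   a nonzero u supported on R with u M vanishing on C exists; then w := u M is
   supported on the two columns outside C while w N = u vanishes on the two rows
   outside R, so the corresponding 2x2 minor of N is zero.  It thus suffices to
   find an invertible N over F_p with no vanishing 2x2 minor.  We take the
   Cauchy matrix N(a,b) = 1/(a-b) (b <> 0) bordered by the column N(a,0) = [a <> 0].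
   If u N = 0, then P = sum_a u_a (1 - (X-a)^(p-1)) interpolates u and has size
   at most p, while by Fermat P' = sum_a u_a (X-a)^(p-2) vanishes at the p-1
   points b <> 0; so P' = 0, P and u are constant, and the border column forces
   the constant to be 0.  For p = 2 all minors are 0x0. *)

From HB Require Import structures.
From mathcomp Require Import all_boot all_order all_algebra all_fingroup all_field.
From mathcomp Require Import ring.
Set Implicit Arguments. Unset Strict Implicit. Unset Printing Implicit Defensive.
Import GRing.Theory.
Local Open Scope ring_scope.

Section ComplementaryMinors.

Variable F : fieldType.

Lemma submx_setsE s t (M : 'M[F]_s) (R C : {set 'I_s}) (hR : #|R| = t) (hC : #|C| = t) :
  submx_sets M hR hC
  = mxsub (enum_val \o cast_ord (esym hR)) (enum_val \o cast_ord (esym hC)) M.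
Proof. by []. Qed.

Lemma mxsub_singular_row m n t (f : 'I_t -> 'I_m) (g : 'I_t -> 'I_n)
    (M : 'M[F]_(m, n)) :
  injective f -> mxsub f g M \notin unitmx ->
  exists u : 'rV[F]_m, [/\ u != 0, forall k, k \notin codom f -> u 0 k = 0
                        & forall j, (u *m M) 0 (g j) = 0].
Proof.
move=> f_inj; rewrite unitmxE unitfE negbK => /det0P [v v_neq0 vMfg].
pose E : 'M[F]_(t, m) := rowsub f 1%:M.
have EEt : E *m E^T = 1%:M.
  apply/matrixP => i j; rewrite !mxE.
  under eq_bigr do rewrite !mxE.
  rewrite (bigD1 (f j)) //= big1 ?addr0 => [|k kfj]; last first.
    by rewrite eq_sym in kfj; rewrite (negbTE kfj) mulr0.
  by rewrite eqxx mulr1 (inj_eq f_inj).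
exists (v *m E); split.
- by apply: contra_neq v_neq0 => vE0; rewrite -[v]mulmx1 -EEt mulmxA vE0 mul0mx.
- move=> k kf; rewrite mxE big1 // => i _; rewrite !mxE.
  by case: eqP kf => [<-|_]; rewrite ?codom_f ?mulr0.
- move=> j; rewrite -mulmxA -rowsubE.
  have := congr1 (fun w : 'rV[F]_t => w 0 j) vMfg.
  by rewrite mxsubcr mulmx_colsub !mxE.
Qed.

Lemma cramer2_eq0 (a b x11 x12 x21 x22 : F) : x11 * x22 != x12 * x21 ->
  a * x11 + b * x21 = 0 -> a * x12 + b * x22 = 0 -> a = 0 /\ b = 0.
Proof.
rewrite -subr_eq0 => det_neq0 e1 e2; split; apply: (mulIf det_neq0); rewrite mul0r.
- transitivity (x22 * (a * x11 + b * x21) - x21 * (a * x12 + b * x22)); first by ring.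
  by rewrite e1 e2 !mulr0 subr0.
- transitivity (x11 * (a * x12 + b * x22) - x12 * (a * x11 + b * x21)); first by ring.
  by rewrite e1 e2 !mulr0 subr0.
Qed.

Lemma row_supp2_eq0 s (N : 'M[F]_s) (l1 l2 k1 k2 : 'I_s) (w : 'rV[F]_s) :
  N l1 k1 * N l2 k2 != N l1 k2 * N l2 k1 ->
  (forall l, l != l1 -> l != l2 -> w 0 l = 0) ->
  (w *m N) 0 k1 = 0 -> (w *m N) 0 k2 = 0 -> w = 0.
Proof.
move=> minor_neq0 w_supp.
have l12 : l1 != l2 by apply: contraNneq minor_neq0 => <-; rewrite mulrC.
have wNE k : (w *m N) 0 k = w 0 l1 * N l1 k + w 0 l2 * N l2 k.
  rewrite mxE (bigD1 l1) // (bigD1 l2) 1?eq_sym //= big1 ?addr0 // => l /andP [ll2 ll1].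
  by rewrite w_supp ?mul0r.
rewrite !wNE => e1 e2; have [w1 w2] := cramer2_eq0 minor_neq0 e1 e2.
apply/rowP => l; rewrite mxE.
have [->|ll1] := eqVneq l l1; first by [].
by have [->|ll2] := eqVneq l l2; last exact: w_supp.
Qed.

Lemma codom_compl2 s t (f : 'I_t -> 'I_s) : injective f -> (t + 2 = s)%N ->
  exists l1 l2 : 'I_s, l1 != l2 /\ forall l, (l \in codom f) = (l != l1) && (l != l2).
Proof.
move=> f_inj ts.
have : #|~: [set l in codom f]| == 2.
  have := cardsC [set l in codom f].
  by rewrite cardsE card_codom // !card_ord -[in RHS]ts => /addnI ->.
case/cards2P => l1 [l2 [l12 compl_f]]; exists l1, l2; split => // l.
have := congr1 (fun A : {set 'I_s} => l \in A) compl_f; rewrite !inE => /negbRL ->.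
by rewrite negb_or.
Qed.

Lemma complementary_minor_unitmx s t (f g : 'I_t -> 'I_s) (M N : 'M[F]_s) :
  injective f -> injective g -> (t + 2 = s)%N -> M *m N = 1%:M ->
  (forall l1 l2 k1 k2, l1 != l2 -> k1 != k2 ->
     N l1 k1 * N l2 k2 != N l1 k2 * N l2 k1) ->
  mxsub f g M \in unitmx.
Proof.
move=> f_inj g_inj ts MN N_minors.
apply: contraT => /(mxsub_singular_row f_inj) [u [u_neq0 u_supp uMg]].
have [l1 [l2 [l12 codom_g]]] := codom_compl2 g_inj ts.
have [k1 [k2 [k12 codom_f]]] := codom_compl2 f_inj ts.
have uMN : u *m M *m N = u by rewrite -mulmxA MN mulmx1.
have uM0 : u *m M = 0.
  apply: (row_supp2_eq0 (N_minors l1 l2 k1 k2 l12 k12)).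
  - move=> l ll1 ll2; have /codomP [j ->] : l \in codom g by rewrite codom_g ll1 ll2.
    exact: uMg.
  - by rewrite uMN u_supp // codom_f eqxx.
  - by rewrite uMN u_supp // codom_f eqxx andbF.
by move: u_neq0; rewrite -uMN uM0 mul0mx eqxx.
Qed.

End ComplementaryMinors.

Section CauchyEntries.

Variable F : fieldType.

(* For y <> 0 the entry at x = y is the junk value 0^-1 = 0. *)
Definition cauchy_entry (x y : F) : F :=
  if y == 0 then (x != 0)%:R else (x - y)^-1.

Lemma cauchy_minor2_neq (x1 x2 y1 y2 : F) : x1 != x2 -> y1 != y2 ->
  (x1 - y1)^-1 * (x2 - y2)^-1 != (x1 - y2)^-1 * (x2 - y1)^-1.
Proof.
move=> x12 y12.
have invB_neq0 (a b : F) : a != b -> (a - b)^-1 != 0 by rewrite invr_eq0 subr_eq0.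
have [e | x1y1] := eqVneq x1 y1; first subst.
  by rewrite subrr invr0 mul0r eq_sym mulf_neq0 ?invB_neq0 // eq_sym.
have [e | x2y2] := eqVneq x2 y2; first subst.
  by rewrite subrr invr0 mulr0 eq_sym mulf_neq0 ?invB_neq0 // eq_sym.
have [e | x1y2] := eqVneq x1 y2; first subst.
  by rewrite subrr invr0 mul0r mulf_neq0 ?invB_neq0 // eq_sym.
have [e | x2y1] := eqVneq x2 y1; first subst.
  by rewrite subrr invr0 mulr0 mulf_neq0 ?invB_neq0 // eq_sym.
rewrite -!invfM (inj_eq invr_inj) -subr_eq0.
have -> : (x1 - y1) * (x2 - y2) - (x1 - y2) * (x2 - y1) = (x1 - x2) * (y1 - y2) by ring.
by rewrite mulf_neq0 // subr_eq0.
Qed.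

Lemma cauchy_border_minor2_neq (x1 x2 y : F) : x1 != x2 -> y != 0 ->
  (x1 != 0)%:R * (x2 - y)^-1 != (x1 - y)^-1 * (x2 != 0)%:R.
Proof.
move=> + y_neq0; rewrite mulr_natl mulr_natr.
have [-> | x1_neq0] := eqVneq x1 0; have [-> | x2_neq0] := eqVneq x2 0 => //= x12.
- by rewrite mulr0n mulr1n eq_sym invr_eq0 sub0r oppr_eq0.
- by rewrite mulr0n mulr1n invr_eq0 sub0r oppr_eq0.
- by rewrite !mulr1n (inj_eq invr_inj) (inj_eq (addIr _)) eq_sym.
Qed.

Lemma cauchy_entry_minor2 (x1 x2 y1 y2 : F) : x1 != x2 -> y1 != y2 ->
  cauchy_entry x1 y1 * cauchy_entry x2 y2 != cauchy_entry x1 y2 * cauchy_entry x2 y1.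
Proof.
rewrite /cauchy_entry => x12 y12.
have [y1_0 | y1_neq0] := eqVneq y1 0; have [y2_0 | y2_neq0] := eqVneq y2 0.
- by rewrite y1_0 y2_0 eqxx in y12.
- exact: cauchy_border_minor2_neq.
- by rewrite mulrC [X in _ != X]mulrC cauchy_border_minor2_neq // eq_sym.
- exact: cauchy_minor2_neq.
Qed.

End CauchyEntries.

Section PrimeField.

Variable p : nat.
Hypothesis p_pr : prime p.

Let p_gt0 : (0 < p)%N := prime_gt0 p_pr.
Let o : 'I_p := Ordinal p_gt0.

Definition Fp_of_ord (i : 'I_p) : 'F_p := i%:R.

Lemma Fp_of_ord_inj : injective Fp_of_ord.
Proof.
move=> i j; rewrite /Fp_of_ord => /(congr1 (@nat_of_ord _)).
by rewrite !val_Fp_nat // !modn_small // => /ord_inj.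
Qed.

Lemma Fp_of_ord_eq0 i : (Fp_of_ord i == 0) = (i == o).
Proof. by rewrite -(inj_eq Fp_of_ord_inj). Qed.

Lemma Fp_natr_eq0 n : (n%:R == 0 :> 'F_p) = (p %| n)%N.
Proof. by rewrite (dvdn_pcharf (pchar_Fp p_pr)). Qed.

Lemma Fp_natr_pred : p.-1%:R = -1 :> 'F_p.
Proof.
by apply/eqP; rewrite -addr_eq0 natr1 prednK // Fp_natr_eq0.
Qed.

Lemma Fp_expr_pred (z : 'F_p) : z != 0 -> z ^+ p.-1 = 1.
Proof.
move=> z_neq0; apply: (mulfI z_neq0); rewrite mulr1 -exprS prednK //.
by have := expf_card z; rewrite card_Fp.
Qed.

Lemma Fp_invE (z : 'F_p) : (2 < p)%N -> z^-1 = z ^+ p.-2.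
Proof.
move=> p_gt2; have [-> | z_neq0] := eqVneq z 0.
  by rewrite invr0 expr0n -subn2 subn_eq0 leqNgt p_gt2.
apply: (mulfI z_neq0); rewrite divff // -exprS.
by rewrite prednK ?Fp_expr_pred // -subn1 subn_gt0 prime_gt1.
Qed.

Definition delta_poly (c : 'F_p) : {poly 'F_p} := 1 - ('X - c%:P) ^+ p.-1.

Lemma horner_delta_poly c x : (delta_poly c).[x] = (x == c)%:R.
Proof.
rewrite !hornerE; have [-> | xc] := eqVneq x c.
  by rewrite subrr expr0n -subn1 subn_eq0 leqNgt prime_gt1 //= subr0.
by rewrite Fp_expr_pred ?subrr // subr_eq0.
Qed.

Lemma size_delta_poly c : (size (delta_poly c) <= p)%N.
Proof.
rewrite (leq_trans (size_polyD _ _)) // size_polyN size_exp_XsubC size_poly1.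
by rewrite prednK // geq_max p_gt0 leqnn.
Qed.

Lemma horner_deriv_delta_poly c x : (2 < p)%N ->
  (delta_poly c)^`().[x] = (x - c)^-1.
Proof.
move=> p_gt2; rewrite derivB derivC deriv_exp derivXsubC mul1r sub0r.
rewrite hornerN hornerMn -mulr_natr Fp_natr_pred mulrN1 opprK.
by rewrite horner_exp hornerXsubC Fp_invE.
Qed.

Lemma deriv_eq0_polyC (P : {poly 'F_p}) :
  (size P <= p)%N -> P^`() = 0 -> P = (P`_0)%:P.
Proof.
move=> size_P P'0; apply/polyP => -[|i]; rewrite coefC //=.
have [ip | pi] := ltnP i.+1 p; last by rewrite nth_default // (leq_trans size_P).
have /eqP := congr1 (fun Q : {poly 'F_p} => Q`_i) P'0.
rewrite coef_deriv coef0 -mulr_natr mulf_eq0 Fp_natr_eq0 => /orP [/eqP //|].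
by move=> /(dvdn_leq (ltn0Sn i)); rewrite leqNgt ip.
Qed.

Definition cauchy_mx : 'M['F_p]_p :=
  \matrix_(a, b) cauchy_entry (Fp_of_ord a) (Fp_of_ord b).

Lemma cauchy_mx_minor2 l1 l2 k1 k2 : l1 != l2 -> k1 != k2 ->
  cauchy_mx l1 k1 * cauchy_mx l2 k2 != cauchy_mx l1 k2 * cauchy_mx l2 k1.
Proof. by move=> l12 k12; rewrite !mxE cauchy_entry_minor2 ?(inj_eq Fp_of_ord_inj). Qed.

Lemma cauchy_mx_row_const (u : 'rV['F_p]_p) : (2 < p)%N ->
  (forall b, b != o -> (u *m cauchy_mx) 0 b = 0) -> exists c, u = const_mx c.
Proof.
move=> p_gt2 u_cols.
pose P := \sum_a u 0 a *: delta_poly (Fp_of_ord a).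
have P_Fp c : P.[Fp_of_ord c] = u 0 c.
  rewrite horner_sum (bigD1 c) //= big1 => [|a ac].
    by rewrite hornerZ horner_delta_poly eqxx mulr1 addr0.
  by rewrite hornerZ horner_delta_poly (inj_eq Fp_of_ord_inj) eq_sym (negbTE ac) mulr0.
(* The columns b <> o of u *m cauchy_mx are the values of -P' at b. *)
have P'_Fp b : b != o -> P^`().[Fp_of_ord b] = 0.
  move=> bo; rewrite -oppr0 -(u_cols b bo) mxE -sumrN linear_sum horner_sum.
  apply: eq_bigr => a _; rewrite linearZ hornerZ horner_deriv_delta_poly // mxE.
  by rewrite /cauchy_entry Fp_of_ord_eq0 (negbTE bo) -mulrN -invrN opprB.
have size_P : (size P <= p)%N.
  apply: (leq_trans (size_sum _ _ _)); apply/bigmax_leqP => a _.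
  exact: leq_trans (size_scale_leq _ _) (size_delta_poly _).
have P'0 : P^`() = 0.
  apply: (@roots_geq_poly_eq0 _ _ (image Fp_of_ord (predC1 o))).
  - by apply/allP => _ /imageP [b bo ->]; apply/eqP/P'_Fp.
  - by rewrite map_inj_uniq ?enum_uniq //; apply: Fp_of_ord_inj.
  - rewrite size_image cardC1 card_ord (leq_trans (size_poly _ _)) //.
    by rewrite -!subn1 leq_sub2r.
exists P`_0; apply/rowP => a.
by rewrite mxE -P_Fp {1}(deriv_eq0_polyC size_P P'0) hornerC.
Qed.

Lemma cauchy_mx_unit : (2 < p)%N -> cauchy_mx \in unitmx.
Proof.
move=> p_gt2; rewrite unitmxE unitfE; apply/negP => /det0P [u u_neq0 uN].
have u_cols b : (u *m cauchy_mx) 0 b = 0 by rewrite uN mxE.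
have [c u_c] := cauchy_mx_row_const p_gt2 (fun b _ => u_cols b).
have N_col_o a : cauchy_mx a o = (a != o)%:R.
  by rewrite mxE /cauchy_entry !Fp_of_ord_eq0 eqxx.
have : (u *m cauchy_mx) 0 o = - c.
  rewrite mxE (bigD1 o) //= N_col_o eqxx mulr0 add0r.
  rewrite (eq_bigr (fun=> c)) => [|a ao]; last by rewrite N_col_o ao u_c mxE mulr1.
  by rewrite sumr_const cardC1 card_ord -mulr_natr Fp_natr_pred mulrN1.
rewrite u_cols => /eqP; rewrite eq_sym oppr_eq0 => /eqP c0.
by move: u_neq0; rewrite u_c c0 eqxx.
Qed.

End PrimeField.

Theorem corollary2p26 (p : nat) (hp : prime p) :
  exists M : 'M['F_p]_p, linear_AONT (p - 2) M.
Proof.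
have [p_gt2 | p_le2] := ltnP 2 p; last first.
  exists 1%:M; split=> [|R C hR hC]; first exact: unitmx1.
  move: (submx_sets _ hR hC); have : (p - 2 = 0)%N by apply/eqP; rewrite subn_eq0.
  by move: (p - 2)%N => t -> A; rewrite unitmxE det_mx00 unitr1.
have N_unit := cauchy_mx_unit hp p_gt2.
exists (invmx (cauchy_mx p)); split=> [|R C hR hC]; first by rewrite unitmx_inv.
rewrite submx_setsE.
apply: (complementary_minor_unitmx _ _ _ (mulVmx N_unit) (cauchy_mx_minor2 hp)).
- exact: inj_comp enum_val_inj (@cast_ord_inj _ _ _).
- exact: inj_comp enum_val_inj (@cast_ord_inj _ _ _).
- by rewrite subnK // ltnW.
Qed.
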